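(* Let $\{E_n\}_{n\ge1}$ be a sequence of diagonal projections such that $\sum_{n\ge1}E_n=I+K$ for some compact operator $K$ (the series converging in the weak, equivalently strong, operator topology). Then there exists an integer $n_0\ge1$ such that: (i) $E_nE_m=\delta_{nm}E_n$ for all $m,n>n_0$; (ii) $E_nE_m$ is a finite-rank projection for all $1\le m,n\le n_0$ with $m\ne n$; (iii) for each $N\ge n_0$, $E^{(N)}=\sum_{n>N}E_n$ is a diagonal projection and $E^{(N)}E_n=0$ for all $n=1,\dots,N$.
   Context: $\mathcal{H}$ is a separable infinite-dimensional complex Hilbert space with a fixed orthonormal basis $\{e_n\}_{n\ge1}$; $\mathcal{D}$ is the algebra of operators diagonal with respect to this basis; a diagonal projection is an orthogonal projection belonging to $\mathcal{D}$. *)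

From HB Require Import structures.
From mathcomp Require Import all_boot all_order all_algebra.
From mathcomp Require Import complex.
From mathcomp Require Import all_classical all_reals all_analysis.
Set Implicit Arguments. Unset Strict Implicit. Unset Printing Implicit Defensive.
Import Order.TTheory GRing.Theory Num.Theory.
Import numFieldNormedType.Exports.
Local Open Scope classical_set_scope.
Local Open Scope ring_scope.

(* The Hilbert space H = l^2(N, C) with orthonormal basis e_k (k : nat);
   elements are represented as complex sequences nat -> R[i]. *)
Definition vec (R : realType) := nat -> R[i].
Definition op (R : realType) := vec R -> vec R.

Section L2.
Variable R : realType.

Definition sqmod (z : R[i]) : R := (@complex.Re R z) ^+ 2 + (@complex.Im R z) ^+ 2.

Definition inl2 (x : vec R) : Prop := cvgn (series (fun k => sqmod (x k))).

Definition l2norm (x : vec R) : R := Num.sqrt (limn (series (fun k => sqmod (x k)))).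

Definition vsub (x y : vec R) : vec R := fun k => x k - y k.

Definition norm_cvg (u : nat -> vec R) (y : vec R) : Prop :=
  (fun j => l2norm (vsub (u j) y)) @ \oo --> (0 : R).

Definition compact_op (T : op R) : Prop :=
  [/\ (forall x, inl2 x -> inl2 (T x)),
      (forall x y, inl2 x -> inl2 y -> T (fun k => x k + y k) = (fun k => T x k + T y k)),
      (forall (a : R[i]) x, inl2 x -> T (fun k => a * x k) = (fun k => a * T x k)) &
      (forall u : nat -> vec R, (forall j, inl2 (u j)) ->
         (exists B : R, forall j, l2norm (u j) <= B) ->
         exists phi : nat -> nat, exists y : vec R,
           {homo phi : m n / (m < n)%N >-> (m < n)%N} /\ inl2 y /\
           norm_cvg (fun j => T (u (phi j))) y)].

Definition diag_proj (P : op R) : Prop :=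
  exists d : nat -> bool, forall x k, P x k = (if d k then x k else 0).

Definition finite_rank (T : op R) : Prop :=
  exists s : seq (vec R), forall x, inl2 x ->
    exists c : nat -> R[i], forall k, T x k = \sum_(i < size s) c i * (nth (fun _ => 0) s i) k.

Definition zero_op (T : op R) : Prop := forall x, T x = (fun _ => 0).

End L2.

From HB Require Import structures.
From mathcomp Require Import all_boot all_order all_algebra.
From mathcomp Require Import complex.
From mathcomp Require Import all_classical all_reals all_analysis.
From mathcomp Require Import lra ring.
Import Order.TTheory GRing.Theory Num.Theory.
Import numFieldNormedType.Exports.
Local Open Scope classical_set_scope.
Local Open Scope ring_scope.

(* Write E_n as multiplication by the 0/1 sequence d n and let c_M(k) count
   the n <= M with d n k, so that the partial sums multiply the k-th
   coordinate by c_M(k).  Testing the hypothesis on e_k shows that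
   c_M(k) - 1 - (K e_k)_k tends to 0; the integer c_M(k) is therefore
   eventually constant (every coordinate is covered by finitely many E_n) and
   its final value is within 1/8 of 1 + (K e_k)_k.  The diagonal of a compact
   operator tends to 0, so from some k0 on every coordinate is covered by
   exactly one E_n, and then K x vanishes on it.  Taking n0 beyond all E_n
   covering one of the first k0 coordinates gives (i) and (iii), and for
   n <> m the range of E_n E_m lies in the span of e_0, ..., e_(k0-1). *)

Set Implicit Arguments. Unset Strict Implicit. Unset Printing Implicit Defensive.

Section SquaredModulus.
Variable R : realType.
Implicit Types a b : R[i].

Lemma sqmod_ge0 a : 0 <= sqmod a.
Proof. rewrite /sqmod; nra. Qed.

Lemma sqmod_le0 a : sqmod a <= 0 -> a = 0.
Proof.
case: a => a1 a2; rewrite /sqmod /= => h.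
by have [-> ->] : a1 = 0 /\ a2 = 0 by split; nra.
Qed.

Lemma sqmodN a : sqmod (- a) = sqmod a.
Proof. by case: a => a1 a2; rewrite /sqmod /=; ring. Qed.

Lemma sqmod0 : sqmod (0 : R[i]) = 0.
Proof. by rewrite /sqmod /= expr0n addr0. Qed.

Lemma sqmodM a b : sqmod (a * b) = sqmod a * sqmod b.
Proof. by case: a => a1 a2; case: b => b1 b2; rewrite /sqmod /=; ring. Qed.

Lemma sqmodD a b : sqmod (a + b) <= 2 * sqmod a + 2 * sqmod b.
Proof.
case: a => a1 a2; case: b => b1 b2; rewrite /sqmod /=.
have := sqr_ge0 (a1 - b1); have := sqr_ge0 (a2 - b2); nra.
Qed.

Lemma sqmod_natr (c : nat) : sqmod (c%:R : R[i]) = c%:R ^+ 2.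
Proof. by rewrite -(rmorph_nat (@complex.real_complex R)) /sqmod /= expr0n addr0. Qed.

Lemma sqmod_natr_lt1 (c : nat) : sqmod (c%:R : R[i]) < 1 -> c = 0%N.
Proof. by rewrite sqmod_natr -natrX ltrn1; case: c. Qed.

Lemma sqmod_natr_sub1_lt1 (c : nat) : sqmod (c%:R - 1 : R[i]) < 1 -> c = 1%N.
Proof.
case: c => [|c]; first by rewrite sub0r sqmodN /sqmod /= expr1n expr0n addr0 ltxx.
by rewrite -natr1 addrK => /sqmod_natr_lt1 ->.
Qed.

End SquaredModulus.

Section SquareSummable.
Variable R : realType.
Implicit Types x y w : vec R.

Lemma sqmod_le_sumsq x k : inl2 x -> sqmod (x k) <= limn (series (fun i => sqmod (x i))).
Proof.
move=> hx; have nd : nondecreasing_seq (series (fun i => sqmod (x i))).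
  by rewrite seriesEnat; apply: nondecreasing_series => i _ _; exact: sqmod_ge0.
apply: le_trans (nondecreasing_cvgn_le nd hx k.+1).
rewrite seriesEnat /= big_nat_recr //= lerDr.
by apply: sumr_ge0 => i _; exact: sqmod_ge0.
Qed.

Lemma l2norm_ge0 x : 0 <= l2norm x.
Proof. exact: sqrtr_ge0. Qed.

Lemma sqmod_le_l2norm x k : inl2 x -> sqmod (x k) <= l2norm x ^+ 2.
Proof.
move=> hx; have hk := sqmod_le_sumsq k hx.
by rewrite /l2norm sqr_sqrtr // (le_trans (sqmod_ge0 _) hk).
Qed.

Lemma l2norm_le x w : inl2 x -> (forall k, sqmod (w k) <= sqmod (x k)) ->
  l2norm w <= l2norm x.
Proof.
move=> hx hwx.
have hw : inl2 w by apply: series_le_cvg hwx hx => k; exact: sqmod_ge0.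
rewrite /l2norm ler_sqrt; first exact: lim_series_le.
exact: le_trans (sqmod_ge0 _) (sqmod_le_sumsq 0 hx).
Qed.

Lemma inl2_le_scale x w (C : R) : 0 <= C -> inl2 x ->
  (forall k, sqmod (w k) <= C * sqmod (x k)) -> inl2 w.
Proof.
move=> C0 hx hw.
apply: (series_le_cvg (v_ := C *: (fun k => sqmod (x k)))) (is_cvg_seriesZ hx) => k /=.
- exact: sqmod_ge0.
- by rewrite mulr_ge0 ?sqmod_ge0.
- exact: hw.
Qed.

Lemma inl2_add x y : inl2 x -> inl2 y -> inl2 (fun k => x k + y k).
Proof.
move=> hx hy.
have hxy : cvgn (series ((2 : R) *: (fun k => sqmod (x k)) + (2 : R) *: (fun k => sqmod (y k)))).
  by apply: is_cvg_seriesD; apply: is_cvg_seriesZ.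
apply: series_le_cvg hxy => k /=; first exact: sqmod_ge0.
  by rewrite addr_ge0 // mulr_ge0 ?sqmod_ge0.
exact: sqmodD.
Qed.

Lemma inl2_sub x y : inl2 x -> inl2 y -> inl2 (vsub x y).
Proof.
move=> hx hy; apply: inl2_add hx _.
by apply: (inl2_le_scale (C := 1)) hy _ => // k; rewrite sqmodN mul1r.
Qed.

Lemma norm_cvg_coord (u : nat -> vec R) y :
  (forall j, inl2 (vsub (u j) y)) -> norm_cvg u y ->
  forall e, 0 < e -> exists N, forall j, (N <= j)%N -> forall k, sqmod (u j k - y k) < e.
Proof.
move=> hu cu e e0.
have m0 : 0 < Num.min e 1 by rewrite lt_min e0 ltr01.
have [N _ hN] := cvgr0_norm_lt _ cu _ m0.
exists N => j hj k; have := hN j hj.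
rewrite /= ger0_norm ?l2norm_ge0 // lt_min => /andP[he h1].
have := sqmod_le_l2norm k (hu j); have := l2norm_ge0 (vsub (u j) y).
rewrite /vsub; nra.
Qed.

Definition ek (k : nat) : vec R := fun j => if j == k then 1 else 0.

Lemma sumsq_ek k n : (k < n)%N -> series (fun j => sqmod (ek k j)) n = 1.
Proof.
move=> kn; rewrite seriesEnat /= (eq_bigr (fun j => if j == k then 1 else 0)).
  by rewrite -big_mkcond big_nat1_eq /= kn.
by move=> j _; rewrite /ek /sqmod; case: (j == k) => /=; ring.
Qed.

Lemma inl2_ek k : inl2 (ek k).
Proof.
apply/cvg_ex; exists 1; apply: cvg_near_cst.
by exists k.+1 => // n /= hn; exact: sumsq_ek.
Qed.

Lemma l2norm_ek k : l2norm (ek k) <= 1.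
Proof.
rewrite /l2norm -sqrtr1 ler_sqrt //; apply: limr_le; first exact: inl2_ek.
by exists k.+1 => // n /= hn; rewrite sumsq_ek.
Qed.

Lemma compact_op_diag_small (K : op R) : compact_op K ->
  forall e, 0 < e -> exists k0, forall k, (k0 <= k)%N -> sqmod (K (ek k) k) < e.
Proof.
case=> inl2_K _ _ K_compact e e0; apply: contrapT => no_k0.
have bad k0 : exists k, (k0 <= k)%N /\ e <= sqmod (K (ek k) k).
  apply: contrapT => h; apply: no_k0; exists k0 => k hk.
  by rewrite ltNge; apply/negP => hek; apply: h; exists k.
have [f hf] := choice bad.
have ek_bounded : exists B, forall j, l2norm (ek (f j)) <= B.
  by exists 1 => j; exact: l2norm_ek.
have [phi [y [phi_mono [hy cvg_y]]]] :=
  K_compact (fun j => ek (f j)) (fun j => @inl2_ek (f j)) ek_bounded.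
have phi_ge j : (j <= phi j)%N.
  by elim: j => // j IH; exact: leq_ltn_trans IH (phi_mono _ _ (ltnSn j)).
have e8 : 0 < e / 8 by rewrite divr_gt0.
(* y is square summable, so its coordinates tend to 0, while K e_k is close
   to y along the subsequence. *)
have [N1 _ y_small] := cvgr0_norm_lt _ (cvg_series_cvg_0 hy) _ e8.
have [N2 Ky_close] := norm_cvg_coord (fun j => inl2_sub (inl2_K _ (@inl2_ek _)) hy) cvg_y e8.
pose j := maxn N1 N2; pose k := f (phi j).
have hk : (N1 <= k)%N := leq_trans (leq_maxl _ _) (leq_trans (phi_ge j) (hf _).1).
have := y_small k hk; have := Ky_close j (leq_maxr _ _) k; have := (hf (phi j)).2.
have := sqmodD (K (ek k) k - y k) (y k); rewrite subrK /= ger0_norm ?sqmod_ge0 //.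
lra.
Qed.

End SquareSummable.

Lemma diag_proj_family (R : realType) (E : nat -> op R) :
  (forall n, (1 <= n)%N -> diag_proj (E n)) ->
  exists d : nat -> nat -> bool,
    forall n, (1 <= n)%N -> forall x k, E n x k = if d n k then x k else 0.
Proof.
move=> hE.
have hd n : exists dn : nat -> bool,
    (1 <= n)%N -> forall x k, E n x k = if dn k then x k else 0.
  case: n => [|n]; first by exists xpred0.
  by have [dn hdn] := hE n.+1 isT; exists dn.
by have [d hd'] := choice hd; exists d.
Qed.

Section DiagonalSums.
Variables (R : realType) (E : nat -> op R) (d : nat -> nat -> bool).
Hypothesis HE : forall n, (1 <= n)%N -> forall x k, E n x k = if d n k then x k else 0.

Definition cover_count a b k := (\sum_(a <= n < b) d n k)%N.

Lemma psum_coord a b x k : (1 <= a)%N ->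
  \sum_(a <= n < b) E n x k = x k * (cover_count a b k)%:R.
Proof.
move=> a1; rewrite /cover_count natr_sum mulr_sumr; apply: eq_big_nat => n /andP[an _].
by rewrite HE ?(leq_trans a1 an) //; case: (d n k); rewrite ?mulr1 ?mulr0.
Qed.

Lemma cover_count_le a b k : (cover_count a b k <= b - a)%N.
Proof.
rewrite -[(b - a)%N]muln1 -sum_nat_const_nat.
by apply: leq_sum => n _; case: (d n k).
Qed.

Lemma inl2_psum a b x : (1 <= a)%N -> inl2 x -> inl2 (fun k => \sum_(a <= n < b) E n x k).
Proof.
move=> a1 hx; apply: (inl2_le_scale (C := b%:R ^+ 2)) hx _ => // k.
rewrite psum_coord // sqmodM sqmod_natr [leRHS]mulrC ler_wpM2l ?sqmod_ge0 //.
rewrite -!natrX ler_nat leq_exp2r //.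
exact: leq_trans (cover_count_le a b k) (leq_subr _ _).
Qed.

Lemma cover_countSr a b k : (a <= b)%N ->
  cover_count a b.+1 k = (cover_count a b k + d b k)%N.
Proof. by move=> ab; rewrite /cover_count big_nat_recr. Qed.

Lemma cover_count_eq0 a b k : (forall n, (a <= n < b)%N -> d n k = false) ->
  cover_count a b k = 0%N.
Proof. by move=> h; rewrite /cover_count big_nat big1 // => n /h ->. Qed.

Lemma cover_count_single a b k c : (forall n, (a <= n < b)%N -> d n k = (n == c)) ->
  cover_count a b k = (a <= c < b)%N.
Proof.
move=> h; rewrite /cover_count (eq_big_nat _ _ (F2 := fun n => if n == c then 1%N else 0%N)).
  by rewrite -big_mkcond big_nat1_eq; case: (_ && _).
by move=> n /h ->; case: (n == c).
Qed.

Lemma cover_count_ge2 a b k n m : (a <= n < b)%N -> (a <= m < b)%N -> n != m ->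
  d n k -> d m k -> (2 <= cover_count a b k)%N.
Proof.
move=> hn hm nm dn dm.
have indicator_sum c : (a <= c < b)%N -> (\sum_(a <= i < b) (i == c))%N = 1%N.
  move=> hc; rewrite (eq_bigr (fun i => if i == c then 1%N else 0%N)).
    by rewrite -big_mkcond big_nat1_eq hc.
  by move=> i _; case: (i == c).
rewrite -[2%N]/(1 + 1)%N -{1}(indicator_sum n hn) -(indicator_sum m hm) -big_split /=.
apply: leq_sum => i _; case: (eqVneq i n) => [->|_]; first by rewrite (negbTE nm) dn.
by case: (eqVneq i m) => [->|//]; rewrite dm.
Qed.

Lemma diag_proj_comp n m : (1 <= n)%N -> (1 <= m)%N -> diag_proj (fun x => E n (E m x)).
Proof.
move=> n1 m1; exists (fun k => d m k && d n k) => x k.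
by rewrite !HE //; case: (d n k); case: (d m k).
Qed.

Definition covered_once k :=
  exists2 c, (1 <= c)%N & forall n, (1 <= n)%N -> d n k = (n == c).

Lemma covered_once_disjoint k n m : covered_once k -> (1 <= n)%N -> (1 <= m)%N ->
  n != m -> ~~ (d n k && d m k).
Proof.
move=> [c _ hc] n1 m1 nm; rewrite !hc //.
by apply/negP => /andP[/eqP en /eqP em]; rewrite en em eqxx in nm.
Qed.

Section IdentityPlusCompact.
Variable K : op R.
Hypothesis hK : compact_op K.
Hypothesis hconv : forall x, inl2 x ->
  norm_cvg (fun M k => \sum_(1 <= n < M.+1) E n x k) (fun k => x k + K x k).

Lemma inl2_residual x M : inl2 x ->
  inl2 (vsub (fun k => \sum_(1 <= n < M.+1) E n x k) (fun k => x k + K x k)).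
Proof.
have [inl2_K _ _ _] := hK; move=> hx.
by apply: inl2_sub; [exact: inl2_psum | exact: inl2_add hx (inl2_K _ hx)].
Qed.

Lemma residual_coord_small x : inl2 x -> forall e, 0 < e ->
  exists N, forall M, (N <= M)%N -> forall k,
    sqmod (x k * (cover_count 1 M.+1 k)%:R - (x k + K x k)) < e.
Proof.
move=> hx e e0.
have [N hN] := norm_cvg_coord (fun M => inl2_residual (M := M) hx) (hconv hx) e0.
by exists N => M hM k; rewrite -psum_coord //; exact: hN.
Qed.

Lemma cover_count_ek_close k : exists N, forall M, (N <= M)%N ->
  sqmod ((cover_count 1 M.+1 k)%:R - 1 - K (ek R k) k) < 1 / 8.
Proof.
have e8 : 0 < 1 / 8 :> R by rewrite divr_gt0.
have [N hN] := residual_coord_small (@inl2_ek R k) e8.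
by exists N => M hM; have := hN M hM k; rewrite /ek eqxx mul1r opprD addrA.
Qed.

Lemma column_finite k : exists B, forall n, (B < n)%N -> d n k = false.
Proof.
have no_step (c : nat) (b : bool) (z : R[i]) :
    sqmod (c%:R - 1 - z) < 1 / 8 -> sqmod ((c + b)%:R - 1 - z) < 1 / 8 -> b = false.
  move=> h1 h2; have := sqmodD ((c + b)%:R - 1 - z) (- (c%:R - 1 - z)).
  have -> : (c + b)%:R - 1 - z - (c%:R - 1 - z) = b%:R :> R[i] by rewrite natrD; ring.
  rewrite sqmodN => hb; have /sqmod_natr_lt1 : sqmod (b%:R : R[i]) < 1 by lra.
  by case: (b).
have [N hN] := cover_count_ek_close k; exists N => -[//|n] hn.
apply: no_step (hN n hn) _.
by rewrite -cover_countSr //; exact: hN n.+1 (ltnW hn).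
Qed.

Lemma eventually_covered_once : exists k0, forall k, (k0 <= k)%N -> covered_once k.
Proof.
have e8 : 0 < 1 / 8 :> R by rewrite divr_gt0.
have [k0 hk0] := compact_op_diag_small hK e8.
exists k0 => k hk.
have [N hN] := cover_count_ek_close k; have [B hB] := column_finite k.
pose M := maxn N B.
have count1 : cover_count 1 M.+1 k = 1%N.
  apply: sqmod_natr_sub1_lt1.
  have := sqmodD ((cover_count 1 M.+1 k)%:R - 1 - K (ek R k) k) (K (ek R k) k).
  by rewrite subrK; have := hN M (leq_maxl _ _); have := hk0 k hk; lra.
have [c hc dc] : exists2 c, (1 <= c < M.+1)%N & d c k.
  apply: contrapT => none; move: count1; rewrite cover_count_eq0 // => n hn.
  by apply/negbTE/negP => dn; apply: none; exists n.
exists c => [|n n1]; first by case/andP: hc.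
case: (eqVneq n c) => [->|nc]; first exact: dc.
apply/negbTE/negP => dn; case: (ltnP n M.+1) => nM.
  by have := cover_count_ge2 (introT andP (conj n1 nM)) hc nc dn dc; rewrite count1.
by rewrite hB // in dn; exact: leq_ltn_trans (leq_maxr _ _) nM.
Qed.

Lemma K_coord_eq0 x k : inl2 x -> covered_once k -> K x k = 0.
Proof.
move=> hx [c c1 hc]; apply: sqmod_le0; rewrite leNgt; apply/negP => pos.
have [N hN] := residual_coord_small hx pos.
have := hN (maxn N c) (leq_maxl _ _) k.
rewrite (cover_count_single (c := c)) => [|n /andP[n1 _]]; last exact: hc.
by rewrite c1 ltnS leq_maxr mulr1n mulr1 opprD addrA subrr sub0r sqmodN ltxx.
Qed.

Section Settled.
Variables (B : nat -> nat) (k0 : nat).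
Hypothesis column_bound : forall k n, (B k < n)%N -> d n k = false.
Hypothesis late_covered_once : forall k, (k0 <= k)%N -> covered_once k.

Definition n0 := maxn 1 (\max_(i < k0) B i).

Lemma early_column_late_free k n : (k < k0)%N -> (n0 < n)%N -> d n k = false.
Proof.
move=> hk hn; apply: column_bound; apply: leq_ltn_trans hn.
apply: leq_trans (leq_maxr 1 _).
exact: (@leq_bigmax _ (fun i : 'I_k0 => B i) (Ordinal hk)).
Qed.

Lemma late_disjoint k n m : (n0 < n)%N -> (1 <= m)%N -> n != m -> ~~ (d n k && d m k).
Proof.
move=> hn m1 nm; case: (ltnP k k0) => hk; first by rewrite early_column_late_free.
apply: covered_once_disjoint (late_covered_once hk) _ m1 nm.
exact: leq_trans (leq_maxl _ _) (ltnW hn).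
Qed.

Lemma late_orthogonal m n : (n0 < m)%N -> (n0 < n)%N ->
  forall x, E n (E m x) = if n == m then E n x else (fun _ => 0).
Proof.
move=> hm hn x.
have m1 : (1 <= m)%N := leq_trans (leq_maxl _ _) (ltnW hm).
have n1 : (1 <= n)%N := leq_trans (leq_maxl _ _) (ltnW hn).
apply: funext => k; rewrite !HE //.
case: eqVneq => [->|nm] /=; first by rewrite HE //; case: (d m k).
by have := late_disjoint k hn m1 nm; case: (d n k); case: (d m k).
Qed.

Lemma finite_rank_comp m n : (1 <= m)%N -> (1 <= n)%N -> m != n ->
  finite_rank (fun x => E n (E m x)).
Proof.
move=> m1 n1 mn; exists (mkseq (ek R) k0) => x _.
exists (fun i => E n (E m x) i) => k; rewrite size_mkseq.
rewrite (eq_bigr (fun i : 'I_k0 => if (i : nat) == k then E n (E m x) i else 0)).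
  rewrite -big_mkcond big_ord1_eq; case: ltnP => // hk.
  have := covered_once_disjoint (late_covered_once hk) m1 n1 mn.
  by rewrite !HE //; case: (d n k); case: (d m k).
by move=> i _; rewrite nth_mkseq // /ek eq_sym; case: (_ == _); rewrite ?mulr1 ?mulr0.
Qed.

Section Tail.
Variable N : nat.
Hypothesis n0_le_N : (n0 <= N)%N.

Definition tail_support k := `[< exists2 n, (N < n)%N & d n k >].

Definition tail_proj : op R := fun x k => if tail_support k then x k else 0.

Lemma tail_support_early k : (k < k0)%N -> tail_support k = false.
Proof.
move=> hk; apply/negbTE/asboolPn => -[n hn dn].
by rewrite early_column_late_free // in dn; exact: leq_ltn_trans n0_le_N hn.
Qed.

Lemma tail_support_once k c : (forall n, (1 <= n)%N -> d n k = (n == c)) ->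
  tail_support k = (N < c)%N.
Proof.
have N1 : (1 <= N.+1)%N by [].
move=> hc; apply/asboolP/idP => [[n hn]|Nc].
  by rewrite hc ?(leq_trans N1 hn) // => /eqP <-.
by exists c; rewrite // hc ?eqxx ?(leq_trans N1 Nc).
Qed.

Lemma tail_proj_comp_eq0 n : (1 <= n <= N)%N -> zero_op (fun x => tail_proj (E n x)).
Proof.
move=> /andP[n1 nN] x; apply: funext => k; rewrite /tail_proj HE //.
case: (ltnP k k0) => hk; first by rewrite tail_support_early.
have [c c1 hc] := late_covered_once hk.
rewrite (tail_support_once hc) hc //; case: eqVneq => [<-|]; last by case: ifP.
by rewrite ltnNge nN.
Qed.

(* On a coordinate covered once K x vanishes, so the tail residual there is
   either 0 or equal to the full residual. *)
Lemma tail_residual_le x M k : (N <= M)%N -> inl2 x ->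
  sqmod (\sum_(N.+1 <= n < M.+1) E n x k - tail_proj x k)
    <= sqmod (\sum_(1 <= n < M.+1) E n x k - (x k + K x k)).
Proof.
move=> NM hx; rewrite !psum_coord //.
case: (ltnP k k0) => hk.
  rewrite /tail_proj tail_support_early // cover_count_eq0.
    by rewrite mulr0n mulr0 subr0 sqmod0 sqmod_ge0.
  by move=> n /andP[hn _]; exact: early_column_late_free hk (leq_ltn_trans n0_le_N hn).
have [c c1 hc] := late_covered_once hk.
rewrite /tail_proj (tail_support_once hc) (K_coord_eq0 hx (late_covered_once hk)) addr0.
rewrite (cover_count_single (a := N.+1) (c := c)) => [|n /andP[n1 _]]; last first.
  exact/hc/(leq_trans _ n1).
rewrite (cover_count_single (a := 1) (c := c)) => [|n /andP[n1 _]]; last exact: hc.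
rewrite c1 /= !ltnS; case: (ltnP N c) => Nc; case: (leqP c M) => cM /=.
- by rewrite mulr1n mulr1.
- by rewrite mulr0n mulr0.
- by rewrite mulr0n mulr0 subr0 sqmod0 sqmod_ge0.
- by have := leq_trans cM (leq_trans Nc NM); rewrite ltnn.
Qed.

Lemma tail_cvg x : inl2 x ->
  norm_cvg (fun M k => \sum_(N.+1 <= n < M.+1) E n x k) (tail_proj x).
Proof.
move=> hx; apply: (@squeeze_cvgr _ _ _ _ (fun=> 0)
    (fun M => l2norm (vsub (fun k => \sum_(1 <= n < M.+1) E n x k) (fun k => x k + K x k))));
    last exact: hconv.
  exists N => // M /= NM; rewrite l2norm_ge0 /=.
  exact: l2norm_le (inl2_residual (M := M) hx) (fun k => tail_residual_le k NM hx).
exact: cvg_cst.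
Qed.

End Tail.
End Settled.
End IdentityPlusCompact.
End DiagonalSums.

Theorem lemma3p5 (R : realType) (E : nat -> op R) :
  (forall n, (1 <= n)%N -> diag_proj (E n)) ->
  (exists K : op R, compact_op K /\
     forall x, inl2 x ->
       norm_cvg (fun M => fun k => \sum_(1 <= n < M.+1) E n x k)
                (fun k => x k + K x k)) ->
  exists n0 : nat, (1 <= n0)%N /\
    (forall m n, (n0 < m)%N -> (n0 < n)%N ->
       forall x, E n (E m x) = (if n == m then E n x else (fun _ => 0))) /\
    (forall m n, (1 <= m <= n0)%N -> (1 <= n <= n0)%N -> m != n ->
       diag_proj (fun x => E n (E m x)) /\ finite_rank (fun x => E n (E m x))) /\
    (forall N, (n0 <= N)%N ->
       exists EN : op R, diag_proj EN /\
         (forall x, inl2 x ->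
            norm_cvg (fun M => fun k => \sum_(N.+1 <= n < M.+1) E n x k) (EN x)) /\
         (forall n, (1 <= n <= N)%N -> zero_op (fun x => EN (E n x)))).
Proof.
move=> /diag_proj_family [d HE] [K [hK hconv]].
have [B column_bound] := choice (column_finite HE hK hconv).
have [k0 late_once] := eventually_covered_once HE hK hconv.
exists (n0 B k0); split; first exact: leq_maxl.
split=> [m n hm hn|]; first exact (late_orthogonal HE column_bound late_once hm hn).
split=> [m n /andP[m1 _] /andP[n1 _] mn | N n0_le_N].
  by split; [exact (diag_proj_comp HE n1 m1) | exact (finite_rank_comp HE late_once m1 n1 mn)].
exists (tail_proj d N); split; first by exists (tail_support d N).
split=> [x hx | n hn].
  exact (tail_cvg HE hK hconv column_bound late_once n0_le_N hx).
exact (tail_proj_comp_eq0 HE column_bound late_once n0_le_N hn).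
Qed.
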